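(* Let $K\subseteq\mathbb R^n$ ($n\ge1$) be a semialgebraic set with nonempty interior and let $d>2$ be even. Then there is no polynomial $\varphi$ in the coefficients of $f\in\mathbb R[x]_{\le d}$ with $\varphi(f)>0$ for all $f\in\operatorname{int}P_d(K)$ and $\varphi(f)=0$ for all $f\in\partial P_d(K)$. Consequently $-\log\varphi(f)$ cannot be a barrier for $P_d(K)$ with $\varphi$ polynomial, and $P_d(K)$ is not representable by a linear matrix inequality (no affine-linear symmetric matrix pencil $L(f)$ in the coefficients of $f$ with $P_d(K)=\{f:L(f)\succeq0\}$ and $L(f)\succ0$ on $\operatorname{int}P_d(K)$).
   Context: $\mathbb R[x]_{\le d}$: real polynomials in $x=(x_1,\dots,x_n)$ of degree $\le d$, with Euclidean topology on coefficients; $P_d(K)=\{f\in\mathbb R[x]_{\le d}: f(x)\ge0\ \forall x\in K\}$. *)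

From Stdlib Require Import Reals Lra Lia List Arith.
Import ListNotations.
Open Scope R_scope.

(* Points of R^m are represented as functions nat -> R; only the
   coordinates 0..m-1 are meaningful (all sets/functions below that
   live on R^m depend only on those coordinates). *)

Fixpoint rsum (n : nat) (f : nat -> R) : R :=
  match n with O => 0 | S k => rsum k f + f k end.

(* a monomial is an exponent list a = [a_0; ...; a_{k-1}] : x_0^a_0 ... x_{k-1}^a_{k-1} *)
Definition mon_eval (a : list nat) (x : nat -> R) : R :=
  fold_right Rmult 1 (map (fun i => x i ^ nth i a O) (seq 0 (length a))).

Definition mpoly := list (R * list nat).

Definition mp_eval (p : mpoly) (x : nat -> R) : R :=
  fold_right Rplus 0 (map (fun t => fst t * mon_eval (snd t) x) p).

Definition mp_in_vars (m : nat) (p : mpoly) : Prop :=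
  Forall (fun t => (length (snd t) <= m)%nat) p.

Inductive sa_formula : Type :=
| SA_pos  : mpoly -> sa_formula
| SA_zero : mpoly -> sa_formula
| SA_and  : sa_formula -> sa_formula -> sa_formula
| SA_or   : sa_formula -> sa_formula -> sa_formula
| SA_not  : sa_formula -> sa_formula.

Fixpoint sa_holds (F : sa_formula) (x : nat -> R) : Prop :=
  match F with
  | SA_pos p => 0 < mp_eval p x
  | SA_zero p => mp_eval p x = 0
  | SA_and F G => sa_holds F x /\ sa_holds G x
  | SA_or F G => sa_holds F x \/ sa_holds G x
  | SA_not F => ~ sa_holds F x
  end.

Fixpoint sa_in_vars (m : nat) (F : sa_formula) : Prop :=
  match F with
  | SA_pos p | SA_zero p => mp_in_vars m p
  | SA_and F G | SA_or F G => sa_in_vars m F /\ sa_in_vars m G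
  | SA_not F => sa_in_vars m F
  end.

Definition semialgebraic (n : nat) (K : (nat -> R) -> Prop) : Prop :=
  exists F : sa_formula, sa_in_vars n F /\ forall x, K x <-> sa_holds F x.

(* ---------- topology of R^m (sup-norm balls, i.e. Euclidean topology) ---------- *)
Definition ballR (m : nat) (c : nat -> R) (r : R) (y : nat -> R) : Prop :=
  forall i, (i < m)%nat -> Rabs (y i - c i) < r.

Definition interiorR (m : nat) (S : (nat -> R) -> Prop) (c : nat -> R) : Prop :=
  exists r, 0 < r /\ forall y, ballR m c r y -> S y.

Definition closureR (m : nat) (S : (nat -> R) -> Prop) (c : nat -> R) : Prop :=
  forall r, 0 < r -> exists y, ballR m c r y /\ S y.

Definition boundaryR (m : nat) (S : (nat -> R) -> Prop) (c : nat -> R) : Prop :=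
  closureR m S c /\ ~ interiorR m S c.

(* all exponent vectors of length n with total degree <= d *)
Fixpoint mons (n d : nat) : list (list nat) :=
  match n with
  | O => [ [] ]
  | S n' => flat_map (fun k => map (cons k) (mons n' (d - k))) (seq 0 (S d))
  end.

Definition dimP (n d : nat) : nat := length (mons n d).

(* the polynomial with coefficient vector c (in the monomial basis mons n d),
   evaluated at x *)
Definition poly_of_coefs (n d : nat) (c : nat -> R) (x : nat -> R) : R :=
  rsum (dimP n d) (fun j => c j * mon_eval (nth j (mons n d) []) x).

Definition Pd (n d : nat) (K : (nat -> R) -> Prop) (c : nat -> R) : Prop :=
  forall x, K x -> 0 <= poly_of_coefs n d c x.

Definition is_barrier (m : nat) (S : (nat -> R) -> Prop) (F : (nat -> R) -> R) : Prop :=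
  forall c, boundaryR m S c ->
    forall M, exists r, 0 < r /\
      forall y, ballR m c r y -> interiorR m S y -> M < F y.

(* matrices of size k: functions nat -> nat -> R, entries i,j < k meaningful *)
Definition quad_form (k : nat) (M : nat -> nat -> R) (v : nat -> R) : R :=
  rsum k (fun i => rsum k (fun j => v i * M i j * v j)).

Definition psd (k : nat) (M : nat -> nat -> R) : Prop :=
  forall v, 0 <= quad_form k M v.

Definition pd (k : nat) (M : nat -> nat -> R) : Prop :=
  forall v, (exists i, (i < k)%nat /\ v i <> 0) -> 0 < quad_form k M v.

Definition pencil (N : nat) (A : nat -> nat -> nat -> R) (c : nat -> R) : nat -> nat -> R :=
  fun i j => A O i j + rsum N (fun l => c l * A (S l) i j).

Definition LMI_representable (N : nat) (S : (nat -> R) -> Prop) : Prop :=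
  exists (k : nat) (A : nat -> nat -> nat -> R),
    (forall l i j, (i < k)%nat -> (j < k)%nat -> A l i j = A l j i) /\
    (forall c, S c <-> psd k (pencil N A c)) /\
    (forall c, interiorR N S c -> pd k (pencil N A c)).

(* Let [a] be the centre of a ball of radius [r] inside [K], let [d = 2m >= 4] and
   [y = x_0 - a_0].  The nonnegative polynomials
     G_u(x) = (y^2 - u)^2 (1 + y^(d-4)) + (sum_i (x_i - a_i)^d - y^d)
   depend quadratically on [u], so their coefficient vectors form a polynomial curve in the
   coefficient space.  For [0 < u < r^2], [G_u] vanishes at the point [a + sqrt u e_0] of [K]
   and so lies on the boundary of [P_d(K)], while [G_(-1)] dominates [1 + |x - a|^d] and so is
   interior.  A polynomial [phi] vanishing on the boundary restricts to a polynomial in [u]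
   vanishing on (0, r^2), hence everywhere, so [phi(G_(-1)) = 0] although [G_(-1)] is interior.
   A logarithmic barrier forces [phi] to vanish at each [G_u], approached from the interior
   along the ray towards [G_(-1)].  For a pencil [L] representing [P_d(K)], [L(G_u)] is
   semidefinite but singular on the arc, so the polynomial [u |-> det L(G_u)] vanishes on
   (0, r^2) and hence at [u = -1], where [L] must be positive definite. *)

From Stdlib Require Import Reals Lra Lia Psatz List Classical FunctionalExtensionality.
From mathcomp Require all_boot all_algebra Rstruct.
Import ListNotations.
Open Scope R_scope.

Lemma rsum_ext n f g : (forall i, (i < n)%nat -> f i = g i) -> rsum n f = rsum n g.
Proof.
  induction n as [|n IH]; intros H; simpl; auto.
  rewrite IH, (H n); [reflexivity | lia | intros; apply H; lia].
Qed.

Lemma rsum_plus n f g : rsum n (fun i => f i + g i) = rsum n f + rsum n g.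
Proof. induction n; simpl; [lra|]. rewrite IHn. lra. Qed.

Lemma rsum_scal n c f : rsum n (fun i => c * f i) = c * rsum n f.
Proof. induction n; simpl; [lra|]. rewrite IHn. lra. Qed.

Lemma rsum_minus n f g : rsum n (fun i => f i - g i) = rsum n f - rsum n g.
Proof. induction n; simpl; [lra|]. rewrite IHn. lra. Qed.

Lemma rsum_const n c : rsum n (fun _ => c) = INR n * c.
Proof. induction n; simpl rsum; [simpl; lra|]. rewrite IHn, S_INR. lra. Qed.

Lemma rsum_le n f g : (forall i, (i < n)%nat -> f i <= g i) -> rsum n f <= rsum n g.
Proof.
  induction n; simpl; intros H; [lra|].
  assert (f n <= g n) by (apply H; lia).
  assert (rsum n f <= rsum n g) by (apply IHn; intros; apply H; lia). lra.
Qed.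

Lemma rsum_nonneg n f : (forall i, (i < n)%nat -> 0 <= f i) -> 0 <= rsum n f.
Proof.
  intros H. replace 0 with (rsum n (fun _ => 0)) by (rewrite rsum_const; lra).
  apply rsum_le; auto.
Qed.

Lemma rsum_term_le n f i :
  (forall j, (j < n)%nat -> 0 <= f j) -> (i < n)%nat -> f i <= rsum n f.
Proof.
  induction n; simpl; intros H Hi; [lia|].
  destruct (Nat.eq_dec i n) as [->|].
  - assert (0 <= rsum n f) by (apply rsum_nonneg; intros; apply H; lia). lra.
  - assert (f i <= rsum n f) by (apply IHn; [intros; apply H; lia | lia]).
    assert (0 <= f n) by (apply H; lia). lra.
Qed.

Lemma rsum_abs n f : Rabs (rsum n f) <= rsum n (fun i => Rabs (f i)).
Proof.
  induction n; simpl; [rewrite Rabs_R0; lra|].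
  eapply Rle_trans; [apply Rabs_triang | lra].
Qed.

Lemma rsum_delta n j g :
  (j < n)%nat -> rsum n (fun i => if Nat.eqb i j then g i else 0) = g j.
Proof.
  induction n; simpl; intros Hj; [lia|].
  destruct (Nat.eqb_spec n j) as [->|Hne].
  - rewrite (rsum_ext j _ (fun _ => 0)), rsum_const; [lra|].
    intros i Hi. destruct (Nat.eqb_spec i j); [lia | reflexivity].
  - rewrite IHn by lia. lra.
Qed.

Lemma rsum_swap n m f :
  rsum n (fun i => rsum m (fun j => f i j)) = rsum m (fun j => rsum n (fun i => f i j)).
Proof.
  induction n; simpl; [rewrite rsum_const; lra|].
  rewrite IHn, <- rsum_plus. reflexivity.
Qed.

Lemma rsum_mul n m f g :
  rsum n (fun i => rsum m (fun j => f i * g j)) = rsum n f * rsum m g.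
Proof.
  rewrite (rsum_ext n _ (fun i => rsum m g * f i)), rsum_scal; [lra|].
  intros i _. rewrite rsum_scal. lra.
Qed.

Lemma rsum_eq0_nonneg n f :
  (forall i, (i < n)%nat -> 0 <= f i) -> rsum n f = 0 -> forall i, (i < n)%nat -> f i = 0.
Proof.
  intros H H0 i Hi. pose proof (rsum_term_le n f i H Hi). pose proof (H i Hi). lra.
Qed.

(** * Polynomial functions of one real variable *)

Inductive poly_fun : (R -> R) -> Prop :=
| poly_fun_const c : poly_fun (fun _ => c)
| poly_fun_id : poly_fun (fun u => u)
| poly_fun_plus f g : poly_fun f -> poly_fun g -> poly_fun (fun u => f u + g u)
| poly_fun_mult f g : poly_fun f -> poly_fun g -> poly_fun (fun u => f u * g u).

Lemma poly_fun_pow f k : poly_fun f -> poly_fun (fun u => f u ^ k).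
Proof.
  intros H; induction k; simpl; [apply poly_fun_const | apply poly_fun_mult; auto].
Qed.

Lemma poly_fun_affine a b : poly_fun (fun u => a + u * b).
Proof. apply poly_fun_plus, poly_fun_mult; constructor. Qed.

Lemma poly_fun_rsum m g :
  (forall l, poly_fun (fun u => g u l)) -> poly_fun (fun u => rsum m (g u)).
Proof. intros H; induction m; simpl; constructor; auto. Qed.

Lemma poly_fun_continuous f : poly_fun f -> continuity f.
Proof.
  induction 1.
  - apply continuity_const. intros ??; reflexivity.
  - apply derivable_continuous, derivable_id.
  - apply continuity_plus; auto.
  - apply continuity_mult; auto.
Qed.

Lemma poly_fun_mon_eval a (x : R -> nat -> R) :
  (forall j, poly_fun (fun u => x u j)) -> poly_fun (fun u => mon_eval a (x u)).
Proof.
  intros H. unfold mon_eval. induction (seq 0 (length a)); simpl; constructor; auto.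
  apply poly_fun_pow; auto.
Qed.

Lemma poly_fun_mp_eval (p : mpoly) (x : R -> nat -> R) :
  (forall j, poly_fun (fun u => x u j)) -> poly_fun (fun u => mp_eval p (x u)).
Proof.
  intros H. unfold mp_eval. induction p; simpl; constructor; auto.
  apply poly_fun_mult; [constructor | apply poly_fun_mon_eval; auto].
Qed.

Definition singular (k : nat) (M : nat -> nat -> R) : Prop :=
  exists v, (exists i, (i < k)%nat /\ v i <> 0) /\
    forall i, (i < k)%nat -> rsum k (fun j => M i j * v j) = 0.

Module RealPoly.
Import all_boot all_algebra Rstruct GRing.Theory Num.Theory.
Local Open Scope ring_scope.

Lemma poly_fun_horner f : poly_fun f -> exists p : {poly R}, forall u, f u = p.[u].
Proof.
elim=> [c||g h _ [p gp] _ [q hq]|g h _ [p gp] _ [q hq]].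
- by exists c%:P => u; rewrite hornerC.
- by exists 'X => u; rewrite hornerX.
- by exists (p + q) => u; rewrite hornerD gp hq.
- by exists (p * q) => u; rewrite hornerM gp hq.
Qed.

Lemma poly_eq0_itv (F : numFieldType) (p : {poly F}) a b :
  a < b -> (forall u, a < u < b -> p.[u] = 0) -> p = 0.
Proof.
move=> ab p0; have ba0 : 0 < b - a by rewrite subr_gt0.
pose t i : F := a + (b - a) / i.+2%:R.
apply: (@roots_geq_poly_eq0 _ p (mkseq t (size p))); last by rewrite size_mkseq.
- apply/allP => _ /mapP [i _ ->]; apply/eqP/p0.
  rewrite /t ltrDl divr_gt0 ?ltr0Sn //= -ltrBrDl ltr_pdivrMr ?ltr0Sn //.
  by rewrite ltr_pMr // ltr1n.
- rewrite map_inj_uniq ?iota_uniq // => i j.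
  by move=> /addrI /(mulfI (lt0r_neq0 ba0)) /invr_inj /eqP; rewrite eqr_nat => /eqP [].
Qed.

Lemma poly_fun_eq0 f a b : poly_fun f -> Rlt a b ->
  (forall u, Rlt a u /\ Rlt u b -> f u = 0) -> forall u, f u = 0.
Proof.
move=> /poly_fun_horner [p fp] ab f0 u; rewrite fp (@poly_eq0_itv _ p a b) ?horner0 //.
- exact/RltP.
- by move=> w /andP [/RltP aw /RltP wb]; rewrite -fp f0.
Qed.

Lemma rsum_big k (f : nat -> R) : rsum k f = \sum_(i < k) f i.
Proof. by elim: k => [|k IH]; rewrite ?big_ord0 // big_ord_recr -IH. Qed.

Lemma singular_det k (M : nat -> nat -> R) :
  singular k M <-> \det (\matrix_(i < k, j < k) M i j) = 0.
Proof.
split.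
- move=> [v [[i0 [/ltP i0k vi0]] Mv0]]; apply/eqP; rewrite -det_tr; apply/det0P.
  exists (\row_j v j); first by apply/eqP => /rowP /(_ (Ordinal i0k)); rewrite !mxE.
  apply/rowP => i; rewrite !mxE; transitivity (rsum k (fun j => M i j * v j)).
    by rewrite rsum_big; apply: eq_big => // j _; rewrite !mxE mulrC.
  by apply: Mv0; apply/ltP.
- rewrite -det_tr => /eqP /det0P [w w0 wM].
  pose v j := if (j < k)%N =P true is ReflectT jk then w 0 (Ordinal jk) else 0.
  have vE (j : 'I_k) : v j = w 0 j.
    by rewrite /v; case: eqP => [jk | /negP]; [congr (w 0 _); apply: val_inj | rewrite ltn_ord].
  exists v; split.
  + have [j wj | w_eq0] := pickP (fun j => w 0 j != 0).
      by exists j; split; [apply/ltP | rewrite vE; apply/eqP].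
    by case/eqP: w0; apply/rowP => j; rewrite mxE; apply/eqP/negbFE/w_eq0.
  + move=> i /ltP ik; have := congr1 (fun r : 'rV_k => r 0 (Ordinal ik)) wM.
    rewrite !mxE => wMi; rewrite rsum_big; apply: etrans wMi.
    by apply: eq_big => // j _; rewrite !mxE vE mulrC.
Qed.

Lemma poly_fun_ext [f g : R -> R] : poly_fun f -> f =1 g -> poly_fun g.
Proof. by move=> pf /functional_extensionality <-. Qed.

Lemma poly_fun_sum (I : Type) (r : seq I) (P : pred I) (F : I -> R -> R) :
  (forall i, poly_fun (F i)) -> poly_fun (fun u => \sum_(i <- r | P i) F i u).
Proof.
move=> FP; elim: r => [|i r IH].
  by apply: (poly_fun_ext (poly_fun_const 0)) => u; rewrite big_nil.
case Pi: (P i).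
  by apply: (poly_fun_ext (poly_fun_plus _ _ (FP i) IH)) => u; rewrite big_cons Pi.
by apply: (poly_fun_ext IH) => u; rewrite big_cons Pi.
Qed.

Lemma poly_fun_prod (I : Type) (r : seq I) (P : pred I) (F : I -> R -> R) :
  (forall i, poly_fun (F i)) -> poly_fun (fun u => \prod_(i <- r | P i) F i u).
Proof.
move=> FP; elim: r => [|i r IH].
  by apply: (poly_fun_ext (poly_fun_const 1)) => u; rewrite big_nil.
case Pi: (P i).
  by apply: (poly_fun_ext (poly_fun_mult _ _ (FP i) IH)) => u; rewrite big_cons Pi.
by apply: (poly_fun_ext IH) => u; rewrite big_cons Pi.
Qed.

Lemma poly_fun_det k (M : R -> nat -> nat -> R) :
  (forall i j, poly_fun (fun u => M u i j)) ->
  poly_fun (fun u => \det (\matrix_(i < k, j < k) M u i j)).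
Proof.
move=> Mpoly; apply: poly_fun_sum => s.
apply: poly_fun_mult; first exact: poly_fun_const.
by apply: poly_fun_prod => i; apply: (poly_fun_ext (Mpoly i _)) => u; rewrite mxE.
Qed.

Lemma singular_poly_fun k (M : R -> nat -> nat -> R) a b :
  (forall i j, poly_fun (fun u => M u i j)) -> Rlt a b ->
  (forall u, Rlt a u /\ Rlt u b -> singular k (M u)) -> forall u, singular k (M u).
Proof.
move=> Mpoly ab Msing u; apply/singular_det.
have := poly_fun_eq0 _ _ _ (poly_fun_det k _ Mpoly) ab; apply.
by move=> w aw; apply/singular_det/Msing.
Qed.
End RealPoly.

(** * Coefficient vectors in the monomial basis *)

Lemma mons_complete n : forall d a,
  length a = n -> (list_sum a <= d)%nat -> In a (mons n d).
Proof.
  induction n; intros d a Hl Hs.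
  - destruct a; simpl in *; [auto | lia].
  - destruct a as [|k a]; simpl in Hl, Hs; [lia|]. cbn [mons]. apply in_flat_map.
    exists k. split; [apply in_seq; lia | apply in_map, IHn; lia].
Qed.

Lemma mons_sound n : forall d a,
  In a (mons n d) -> length a = n /\ (list_sum a <= d)%nat.
Proof.
  induction n; intros d a H; cbn [mons] in H.
  - destruct H as [<-|[]]. simpl; lia.
  - apply in_flat_map in H. destruct H as [k [Hk Ha]]. apply in_seq in Hk.
    apply in_map_iff in Ha. destruct Ha as [a' [<- Ha']]. apply IHn in Ha'. simpl; lia.
Qed.

Lemma mon_eval_cons h t x : mon_eval (h :: t) x = x O ^ h * mon_eval t (fun j => x (S j)).
Proof.
  unfold mon_eval. simpl. f_equal. rewrite <- seq_shift, map_map. reflexivity.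
Qed.

Lemma mon_eval_repeat0 n x : mon_eval (repeat O n) x = 1.
Proof.
  revert x; induction n; intros x; [reflexivity|].
  simpl. rewrite mon_eval_cons, IHn. simpl. lra.
Qed.

Fixpoint unit_exps (n i k : nat) : list nat :=
  match n, i with
  | O, _ => []
  | S n, O => k :: repeat O n
  | S n, S i => O :: unit_exps n i k
  end.

Lemma unit_exps_spec n : forall i k, (i < n)%nat ->
  length (unit_exps n i k) = n /\ list_sum (unit_exps n i k) = k /\
  forall x, mon_eval (unit_exps n i k) x = x i ^ k.
Proof.
  induction n; intros i k Hi; [lia|]. destruct i as [|i]; simpl.
  - assert (Hs : forall m, list_sum (repeat O m) = O) by (induction m; simpl; auto).
    rewrite repeat_length, Hs. repeat split; [lia|]. intros x.
    rewrite mon_eval_cons, mon_eval_repeat0. lra.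
  - destruct (IHn i k ltac:(lia)) as [H1 [H2 H3]]. repeat split; [lia | exact H2|].
    intros x. rewrite mon_eval_cons, H3. simpl. lra.
Qed.

Lemma mon_eval_bound a : forall x B, 1 <= B ->
  (forall j, (j < length a)%nat -> Rabs (x j) <= B) -> Rabs (mon_eval a x) <= B ^ list_sum a.
Proof.
  induction a as [|h t IH]; intros x B HB Hx.
  - unfold mon_eval. simpl. rewrite Rabs_R1. lra.
  - rewrite mon_eval_cons. simpl list_sum. rewrite pow_add, Rabs_mult, <- RPow_abs.
    apply Rmult_le_compat; [apply pow_le, Rabs_pos | apply Rabs_pos | |].
    + apply pow_incr. split; [apply Rabs_pos | apply Hx; simpl; lia].
    + apply IH; auto. intros j Hj. apply Hx. simpl; lia.
Qed.

Definition represents (n d : nat) (c : nat -> R) (f : (nat -> R) -> R) : Prop :=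
  forall x, poly_of_coefs n d c x = f x.

Section Coefficients.
Variables n d : nat.
Notation N := (dimP n d).
Notation poly := (poly_of_coefs n d).

Lemma poly_of_coefs_plus c1 c2 x : poly (fun j => c1 j + c2 j) x = poly c1 x + poly c2 x.
Proof. unfold poly_of_coefs. rewrite <- rsum_plus. apply rsum_ext; intros; lra. Qed.

Lemma poly_of_coefs_scal a c x : poly (fun j => a * c j) x = a * poly c x.
Proof. unfold poly_of_coefs. rewrite <- rsum_scal. apply rsum_ext; intros; lra. Qed.

Lemma poly_of_coefs_ext c1 c2 x :
  (forall j, (j < N)%nat -> c1 j = c2 j) -> poly c1 x = poly c2 x.
Proof. intros H. apply rsum_ext. intros j Hj. rewrite H; auto. Qed.

Lemma poly_of_coefs_delta j a x : (j < N)%nat ->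
  poly (fun i => if Nat.eqb i j then a else 0) x = a * mon_eval (nth j (mons n d) []) x.
Proof.
  intros Hj. unfold poly_of_coefs.
  rewrite <- (rsum_delta N j (fun i => a * mon_eval (nth i (mons n d) []) x)) by auto.
  apply rsum_ext. intros i _. destruct (Nat.eqb i j); lra.
Qed.

Lemma represents_plus c1 c2 f g : represents n d c1 f -> represents n d c2 g ->
  represents n d (fun j => c1 j + c2 j) (fun x => f x + g x).
Proof. intros H1 H2 x. rewrite poly_of_coefs_plus, H1, H2. reflexivity. Qed.

Lemma represents_scal a c f : represents n d c f ->
  represents n d (fun j => a * c j) (fun x => a * f x).
Proof. intros H x. rewrite poly_of_coefs_scal, H. reflexivity. Qed.

Lemma represents_mon a : In a (mons n d) -> exists c, represents n d c (mon_eval a).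
Proof.
  intros Ha. destruct (In_nth _ a [] Ha) as [j [Hj E]].
  exists (fun i => if Nat.eqb i j then 1 else 0). intros x.
  rewrite poly_of_coefs_delta, E by exact Hj. lra.
Qed.

Lemma represents_pow i k : (i < n)%nat -> (k <= d)%nat ->
  exists c, represents n d c (fun x => x i ^ k).
Proof.
  intros Hi Hk. destruct (unit_exps_spec n i k Hi) as [H1 [H2 H3]].
  destruct (represents_mon (unit_exps n i k)) as [c Hc]; [apply mons_complete; lia|].
  exists c. intros x. rewrite Hc. apply H3.
Qed.

Lemma represents_shift_pow i b k : (i < n)%nat -> (k <= d)%nat ->
  exists c, represents n d c (fun x => (x i - b) ^ k).
Proof.
  intros Hi Hk.
  assert (Hpartial : forall m, (m <= k)%nat -> exists c, represents n d c
    (fun x => sum_f_R0 (fun j => C k j * x i ^ j * (- b) ^ (k - j)) m)).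
  { induction m; intros Hm.
    - destruct (represents_pow i 0 Hi ltac:(lia)) as [c Hc].
      exists (fun j => C k 0 * (- b) ^ (k - 0) * c j). intros x.
      rewrite poly_of_coefs_scal, Hc. simpl. ring.
    - destruct (IHm ltac:(lia)) as [c1 H1].
      destruct (represents_pow i (S m) Hi ltac:(lia)) as [c2 H2].
      exists (fun j => c1 j + C k (S m) * (- b) ^ (k - S m) * c2 j). intros x.
      rewrite poly_of_coefs_plus, poly_of_coefs_scal, H1, H2, tech5. ring. }
  destruct (Hpartial k (le_n k)) as [c Hc]. exists c. intros x.
  rewrite Hc. unfold Rminus. rewrite binomial. reflexivity.
Qed.

Lemma represents_rsum (g : nat -> (nat -> R) -> R) m :
  (forall i, (i < m)%nat -> exists c, represents n d c (g i)) ->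
  exists c, represents n d c (fun x => rsum m (fun i => g i x)).
Proof.
  induction m; intros H.
  - exists (fun _ => 0). intros x. unfold poly_of_coefs.
    rewrite (rsum_ext _ _ (fun _ => 0)), rsum_const; [simpl; lra | intros; lra].
  - destruct IHm as [c1 H1]; [intros; apply H; lia|].
    destruct (H m ltac:(lia)) as [c2 H2].
    exists (fun j => c1 j + c2 j). intros x. rewrite poly_of_coefs_plus, H1, H2. reflexivity.
Qed.

Lemma mon_basis_bound j x B : (j < N)%nat -> 1 <= B ->
  (forall i, (i < n)%nat -> Rabs (x i) <= B) -> Rabs (mon_eval (nth j (mons n d) []) x) <= B ^ d.
Proof.
  intros Hj HB Hx. destruct (mons_sound n d (nth j (mons n d) [])) as [H1 H2].
  { apply nth_In. exact Hj. }
  apply Rle_trans with (B ^ list_sum (nth j (mons n d) [])).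
  - apply mon_eval_bound; auto. rewrite H1. exact Hx.
  - apply Rle_pow; auto.
Qed.

Lemma constant_mon_index : exists j, (j < N)%nat /\ forall x, mon_eval (nth j (mons n d) []) x = 1.
Proof.
  destruct (In_nth (mons n d) (repeat O n) []) as [j [Hj E]].
  { apply mons_complete; [apply repeat_length | induction n; simpl; lia]. }
  exists j. split; [exact Hj|]. intros x. rewrite E. apply mon_eval_repeat0.
Qed.
End Coefficients.

(** * Positive definite matrices and linear pencils *)

Lemma quad_form_ext k M v w :
  (forall i, (i < k)%nat -> v i = w i) -> quad_form k M v = quad_form k M w.
Proof.
  intros H. unfold quad_form. apply rsum_ext; intros i Hi. apply rsum_ext; intros j Hj.
  rewrite (H i Hi), (H j Hj). reflexivity.
Qed.

Lemma quad_form_S k M v : quad_form (S k) M v =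
  quad_form k M v + v k * rsum k (fun i => (M i k + M k i) * v i) + M k k * v k ^ 2.
Proof.
  unfold quad_form. simpl rsum. rewrite rsum_plus.
  replace (v k * rsum k (fun i => (M i k + M k i) * v i)) with
    (rsum k (fun i => v i * M i k * v k) + rsum k (fun j => v k * M k j * v j)).
  - ring.
  - rewrite <- rsum_scal, <- rsum_plus. apply rsum_ext; intros; ring.
Qed.

Lemma cauchy_schwarz n b v :
  (rsum n (fun i => b i * v i)) ^ 2 <= rsum n (fun i => b i ^ 2) * rsum n (fun i => v i ^ 2).
Proof.
  induction n; cbn [rsum]; [nra|].
  set (S := rsum n (fun i => b i * v i)) in *.
  set (B := rsum n (fun i => b i ^ 2)) in *. set (V := rsum n (fun i => v i ^ 2)) in *.
  assert (0 <= B) by (apply rsum_nonneg; intros; nra).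
  assert (0 <= V) by (apply rsum_nonneg; intros; nra).
  (* [2 S b v <= B v^2 + b^2 V] since its square is at most [4 B V (b v)^2]. *)
  assert (2 * S * (b n * v n) <= B * v n ^ 2 + b n ^ 2 * V).
  { destruct (Rle_or_lt (2 * S * (b n * v n)) 0) as [|Hpos]; [nra|].
    apply Rsqr_incr_0_var; [unfold Rsqr | nra].
    assert (S ^ 2 * (b n * v n) ^ 2 <= B * V * (b n * v n) ^ 2)
      by (apply Rmult_le_compat_r; nra).
    pose proof (pow2_ge_0 (B * v n ^ 2 - b n ^ 2 * V)). nra. }
  nra.
Qed.

Section Schur.
Variables (k : nat) (M : nat -> nat -> R).
Let m := M k k.
Let b i := (M i k + M k i) / 2.
Let beta v := rsum k (fun i => b i * v i).
Definition schur i j := M i j - b i * b j / m.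

Lemma quad_form_schur v : 0 < m ->
  quad_form (S k) M v = quad_form k schur v + m * (v k + beta v / m) ^ 2.
Proof.
  intros Hm. rewrite quad_form_S.
  replace (rsum k (fun i => (M i k + M k i) * v i)) with (2 * beta v)
    by (unfold beta; rewrite <- rsum_scal; apply rsum_ext; intros; unfold b; field).
  assert (E : quad_form k schur v = quad_form k M v - beta v ^ 2 / m).
  { unfold quad_form, schur. rewrite (rsum_ext k _ (fun i =>
      rsum k (fun j => v i * M i j * v j) - / m * rsum k (fun j => (b i * v i) * (b j * v j)))).
    - rewrite rsum_minus, rsum_scal, rsum_mul. unfold beta. fold m. field. lra.
    - intros i _. rewrite <- rsum_scal, <- rsum_minus. apply rsum_ext; intros. field. lra. }
  rewrite E. fold m. field. lra.
Qed.

Lemma pd_diag_pos : pd (S k) M -> 0 < m.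
Proof.
  intros HM. set (e := fun i => if Nat.eqb i k then 1 else 0).
  replace m with (quad_form (S k) M e).
  - apply HM. exists k. unfold e. rewrite Nat.eqb_refl. split; [lia | lra].
  - rewrite quad_form_S, (quad_form_ext k M e (fun _ => 0)), (rsum_ext k _ (fun _ => 0)).
    + replace (quad_form k M (fun _ => 0)) with 0.
      * rewrite rsum_const. unfold e. rewrite Nat.eqb_refl. fold m. ring.
      * unfold quad_form. rewrite (rsum_ext k _ (fun _ => 0)), rsum_const; [ring|].
        intros. rewrite (rsum_ext k _ (fun _ => 0)), rsum_const; [ring | intros; ring].
    + intros i Hi. unfold e. destruct (Nat.eqb_spec i k); [lia | ring].
    + intros i Hi. unfold e. destruct (Nat.eqb_spec i k); [lia | reflexivity].
Qed.

Lemma pd_schur : pd (S k) M -> pd k schur.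
Proof.
  intros HM v [i [Hi Hv]]. pose proof (pd_diag_pos HM) as Hm.
  set (w := fun j => if Nat.eqb j k then - beta v / m else v j).
  assert (Hw : forall j, (j < k)%nat -> w j = v j).
  { intros j Hj. unfold w. destruct (Nat.eqb_spec j k); [lia | reflexivity]. }
  assert (Hpos : 0 < quad_form (S k) M w).
  { apply HM. exists i. split; [lia|]. rewrite Hw; auto. }
  rewrite quad_form_schur, (quad_form_ext k schur w v Hw) in Hpos by exact Hm.
  replace (beta w) with (beta v) in Hpos
    by (unfold beta; apply rsum_ext; intros j Hj; rewrite Hw; auto).
  unfold w in Hpos. rewrite Nat.eqb_refl in Hpos.
  replace (- beta v / m + beta v / m) with 0 in Hpos by (field; lra). lra.
Qed.
End Schur.

Lemma coercive_extend m lam' B : 0 < m -> 0 < lam' -> 0 <= B -> exists lam, 0 < lam /\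
  forall V x beta Q, 0 <= V -> beta ^ 2 <= B * V -> lam' * V <= Q ->
    lam * (V + x ^ 2) <= Q + m * (x + beta / m) ^ 2.
Proof.
  intros Hm Hl' HB. set (t := 1 + 2 * (B / m ^ 2)).
  assert (HBm : 0 <= B / m ^ 2)
    by (apply Rmult_le_pos; [exact HB | left; apply Rinv_0_lt_compat, pow_lt, Hm]).
  set (mu := Rmin (m / 2) lam').
  assert (Hmu : 0 < mu) by (apply Rmin_glb_lt; lra).
  exists (mu / t). split; [apply Rdiv_lt_0_compat; unfold t; lra|].
  intros V x beta Q HV Hcs HQ. set (w := x + beta / m).
  assert (Hlam1 : mu / t <= m / 2).
  { apply (Rle_trans _ mu); [|apply Rmin_l].
    unfold Rdiv. rewrite <- (Rmult_1_r mu) at 2. apply Rmult_le_compat_l; [lra|].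
    rewrite <- Rinv_1. apply Rinv_le_contravar; unfold t; lra. }
  assert (Hlam2 : mu / t * t <= lam').
  { replace (mu / t * t) with mu by (field; unfold t; lra). apply Rmin_r. }
  assert (Hbeta : (beta / m) ^ 2 <= B / m ^ 2 * V).
  { replace ((beta / m) ^ 2) with (beta ^ 2 / m ^ 2) by (field; lra).
    replace (B / m ^ 2 * V) with (B * V / m ^ 2) by (field; lra).
    apply Rmult_le_compat_r; [left; apply Rinv_0_lt_compat, pow_lt, Hm | exact Hcs]. }
  assert (Hx : x ^ 2 <= 2 * w ^ 2 + 2 * (beta / m) ^ 2).
  { pose proof (pow2_ge_0 (w + beta / m)). replace x with (w - beta / m) by (unfold w; ring).
    nra. }
  assert (Hpos : 0 <= mu / t) by (apply Rlt_le, Rdiv_lt_0_compat; unfold t; lra).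
  assert (mu / t * x ^ 2 <= mu / t * (2 * w ^ 2) + mu / t * (2 * (B / m ^ 2 * V))) by nra.
  assert (mu / t * V + mu / t * (2 * (B / m ^ 2 * V)) = mu / t * t * V) by (unfold t; ring).
  assert (mu / t * (2 * w ^ 2) <= m * w ^ 2) by (pose proof (pow2_ge_0 w); nra).
  assert (mu / t * t * V <= lam' * V) by (apply Rmult_le_compat_r; assumption).
  lra.
Qed.

Lemma pd_coercive k : forall M, pd k M -> exists lam, 0 < lam /\
  forall v, lam * rsum k (fun i => v i ^ 2) <= quad_form k M v.
Proof.
  induction k as [|k IH]; intros M HM.
  { exists 1. split; [lra|]. intros v. unfold quad_form. simpl. lra. }
  pose proof (pd_diag_pos k M HM) as Hm.
  destruct (IH _ (pd_schur k M HM)) as [lam' [Hl' Hlam']].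
  set (b := fun i => (M i k + M k i) / 2).
  destruct (coercive_extend (M k k) lam' (rsum k (fun i => b i ^ 2))) as [lam [Hl Hlam]];
    [exact Hm | exact Hl' | apply rsum_nonneg; intros; apply pow2_ge_0|].
  exists lam. split; [exact Hl|]. intros v.
  rewrite quad_form_schur by exact Hm. cbn [rsum]. apply Hlam.
  - apply rsum_nonneg. intros; apply pow2_ge_0.
  - apply cauchy_schwarz.
  - apply Hlam'.
Qed.

Lemma quad_form_minus k M1 M2 v :
  quad_form k (fun i j => M1 i j - M2 i j) v = quad_form k M1 v - quad_form k M2 v.
Proof.
  unfold quad_form. rewrite <- rsum_minus. apply rsum_ext; intros i _.
  rewrite <- rsum_minus. apply rsum_ext; intros; ring.
Qed.

Lemma quad_form_abs_le k D delta v :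
  (forall i j, (i < k)%nat -> (j < k)%nat -> Rabs (D i j) <= delta i j) ->
  Rabs (quad_form k D v) <=
    rsum k (fun i => rsum k (fun j => delta i j)) * rsum k (fun i => v i ^ 2).
Proof.
  intros HD. set (V := rsum k (fun i => v i ^ 2)).
  assert (Hv : forall i, (i < k)%nat -> Rabs (v i) ^ 2 <= V).
  { intros i Hi. rewrite pow2_abs. apply (rsum_term_le k (fun i => v i ^ 2)); auto.
    intros; apply pow2_ge_0. }
  unfold quad_form. eapply Rle_trans; [apply rsum_abs|].
  rewrite Rmult_comm, <- rsum_scal. apply rsum_le; intros i Hi.
  eapply Rle_trans; [apply rsum_abs|]. rewrite <- rsum_scal. apply rsum_le; intros j Hj.
  rewrite !Rabs_mult.
  assert (Rabs (v i) * Rabs (v j) <= V).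
  { pose proof (Hv i Hi). pose proof (Hv j Hj).
    pose proof (pow2_ge_0 (Rabs (v i) - Rabs (v j))). nra. }
  replace (Rabs (v i) * Rabs (D i j) * Rabs (v j)) with (Rabs (v i) * Rabs (v j) * Rabs (D i j))
    by ring.
  apply Rmult_le_compat; auto; apply Rmult_le_pos || apply Rabs_pos; apply Rabs_pos.
Qed.

Lemma pencil_diff_abs_le N A c c' eps i j :
  (forall l, (l < N)%nat -> Rabs (c' l - c l) < eps) ->
  Rabs (pencil N A c' i j - pencil N A c i j) <= eps * rsum N (fun l => Rabs (A (S l) i j)).
Proof.
  intros Hc'. unfold pencil.
  replace (A O i j + rsum N (fun l => c' l * A (S l) i j) -
           (A O i j + rsum N (fun l => c l * A (S l) i j)))
    with (rsum N (fun l => (c' l - c l) * A (S l) i j))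
    by (rewrite (rsum_ext N _ (fun l => c' l * A (S l) i j - c l * A (S l) i j))
          by (intros; ring); rewrite rsum_minus; ring).
  eapply Rle_trans; [apply rsum_abs|]. rewrite <- rsum_scal. apply rsum_le; intros l Hl.
  rewrite Rabs_mult. apply Rmult_le_compat_r; [apply Rabs_pos | left; auto].
Qed.

Lemma pencil_open N A c k : pd k (pencil N A c) -> exists eps, 0 < eps /\
  forall c', (forall l, (l < N)%nat -> Rabs (c' l - c l) < eps) -> psd k (pencil N A c').
Proof.
  intros Hpd. destruct (pd_coercive k _ Hpd) as [lam [Hl Hlam]].
  set (alpha := rsum k (fun i => rsum k (fun j => rsum N (fun l => Rabs (A (S l) i j))))).
  assert (Ha : 0 <= alpha) by (repeat (apply rsum_nonneg; intros); apply Rabs_pos).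
  set (eps := lam / (alpha + 1)).
  assert (He : 0 < eps) by (apply Rdiv_lt_0_compat; lra).
  exists eps. split; [exact He|]. intros c' Hc' v.
  set (D := fun i j => pencil N A c' i j - pencil N A c i j).
  pose proof (quad_form_abs_le k D _ v (fun i j _ _ => pencil_diff_abs_le N A c c' eps i j Hc'))
    as HQ.
  rewrite (rsum_ext k _ (fun i => eps * rsum k (fun j => rsum N (fun l => Rabs (A (S l) i j)))))
    in HQ by (intros; apply rsum_scal).
  rewrite rsum_scal in HQ. fold alpha in HQ.
  pose proof (Hlam v). set (V := rsum k (fun i => v i ^ 2)) in *.
  assert (0 <= V) by (apply rsum_nonneg; intros; apply pow2_ge_0).
  assert (eps * alpha <= lam).
  { unfold eps. replace (lam / (alpha + 1) * alpha) with (lam * (alpha / (alpha + 1)))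
      by (field; lra).
    assert (alpha / (alpha + 1) <= 1).
    { apply (Rmult_le_reg_r (alpha + 1)); [lra|]. field_simplify; lra. }
    nra. }
  assert (Hdiff : quad_form k (pencil N A c') v = quad_form k (pencil N A c) v + quad_form k D v)
    by (unfold D; rewrite quad_form_minus; ring).
  pose proof (Rle_abs (- quad_form k D v)) as Habs. rewrite Rabs_Ropp in Habs. nra.
Qed.

Lemma quad_form_add_scal k M v w t :
  (forall i j, (i < k)%nat -> (j < k)%nat -> M i j = M j i) ->
  quad_form k M (fun i => v i + t * w i) = quad_form k M v
    + 2 * t * rsum k (fun i => rsum k (fun j => v i * M i j * w j)) + t ^ 2 * quad_form k M w.
Proof.
  intros Hs. unfold quad_form.
  assert (E : rsum k (fun i => rsum k (fun j => w i * M i j * v j)) =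
              rsum k (fun i => rsum k (fun j => v i * M i j * w j))).
  { rewrite rsum_swap. apply rsum_ext; intros i Hi. apply rsum_ext; intros j Hj.
    rewrite Hs by auto. ring. }
  rewrite (rsum_ext k _ (fun i => rsum k (fun j => v i * M i j * v j)
    + t * rsum k (fun j => v i * M i j * w j) + t * rsum k (fun j => w i * M i j * v j)
    + t ^ 2 * rsum k (fun j => w i * M i j * w j))).
  - rewrite !rsum_plus, !rsum_scal, E. ring.
  - intros i _. rewrite <- !rsum_scal, <- !rsum_plus. apply rsum_ext; intros; ring.
Qed.

Lemma sq_dominates_linear B C : (forall t, 0 <= 2 * t * B + t ^ 2 * C) -> B = 0.
Proof.
  intros H. assert (HC : 0 <= C) by (pose proof (H 1); pose proof (H (-1)); nra).
  pose proof (H (- B / (C + 1))) as Ht.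
  replace (2 * (- B / (C + 1)) * B + (- B / (C + 1)) ^ 2 * C)
    with (- (B ^ 2 * (C + 2)) / (C + 1) ^ 2) in Ht by (field; lra).
  assert (0 < (C + 1) ^ 2) by (apply pow_lt; lra).
  assert (B ^ 2 * (C + 2) <= 0).
  { apply Ropp_le_cancel. rewrite Ropp_0. unfold Rdiv in Ht.
    apply (Rmult_le_reg_r (/ (C + 1) ^ 2)); [apply Rinv_0_lt_compat; lra | lra]. }
  nra.
Qed.

Lemma psd_null k M v : (forall i j, (i < k)%nat -> (j < k)%nat -> M i j = M j i) ->
  psd k M -> quad_form k M v = 0 -> forall i, (i < k)%nat -> rsum k (fun j => M i j * v j) = 0.
Proof.
  intros Hs Hp Hq.
  set (w := fun i => rsum k (fun j => M i j * v j)).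
  assert (Hcross : rsum k (fun i => rsum k (fun j => v i * M i j * w j)) =
                   rsum k (fun i => w i ^ 2)).
  { rewrite rsum_swap. apply rsum_ext; intros j Hj.
    rewrite (rsum_ext k _ (fun i => w j * (M j i * v i))), rsum_scal by
      (intros i Hi; rewrite (Hs i j) by auto; ring).
    unfold w. ring. }
  assert (Hw : rsum k (fun i => w i ^ 2) = 0).
  { rewrite <- Hcross. apply (sq_dominates_linear _ (quad_form k M w)). intros t.
    pose proof (Hp (fun i => v i + t * w i)) as H.
    rewrite quad_form_add_scal, Hq in H by exact Hs. lra. }
  intros i Hi. change (w i = 0). enough (w i ^ 2 = 0) by nra.
  apply (rsum_eq0_nonneg k (fun i => w i ^ 2)); auto. intros; apply pow2_ge_0.
Qed.

Lemma lmi_boundary_singular N k A S c :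
  (forall l i j, (i < k)%nat -> (j < k)%nat -> A l i j = A l j i) ->
  (forall c, S c <-> psd k (pencil N A c)) ->
  S c -> ~ interiorR N S c -> singular k (pencil N A c).
Proof.
  intros Hsym HS Hc Hnint.
  assert (Hnpd : ~ pd k (pencil N A c)).
  { intros Hpd. apply Hnint. destruct (pencil_open N A c k Hpd) as [eps [He Hop]].
    exists eps. split; [exact He|]. intros c' Hc'. apply HS, Hop. intros l Hl. apply Hc'; exact Hl. }
  apply not_all_ex_not in Hnpd as [v Hv]. apply imply_to_and in Hv as [Hnz Hq].
  exists v. split; [exact Hnz|]. apply psd_null.
  - intros i j Hi Hj. unfold pencil. rewrite Hsym by auto. f_equal.
    apply rsum_ext. intros. rewrite Hsym; auto.
  - apply HS, Hc.
  - pose proof (proj1 (HS c) Hc v). lra.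
Qed.

(** * The witness curve *)

Lemma even_pow_nonneg z m : 0 <= z ^ (2 * m).
Proof. rewrite pow_mult. apply pow_le, pow2_ge_0. Qed.

Lemma even_pow_shift_le z b m : z ^ (2 * m) <= 2 ^ (2 * m) * ((z - b) ^ (2 * m) + b ^ (2 * m)).
Proof.
  set (M := Rmax (Rabs (z - b)) (Rabs b)).
  assert (Habs : forall w, Rabs w ^ (2 * m) = w ^ (2 * m)).
  { intros w. rewrite RPow_abs. apply Rabs_right, Rle_ge, even_pow_nonneg. }
  assert (Hz : Rabs z <= 2 * M).
  { replace z with ((z - b) + b) at 1 by ring. eapply Rle_trans; [apply Rabs_triang|].
    pose proof (Rmax_l (Rabs (z - b)) (Rabs b)). pose proof (Rmax_r (Rabs (z - b)) (Rabs b)).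
    unfold M. lra. }
  assert (HM : M ^ (2 * m) <= (z - b) ^ (2 * m) + b ^ (2 * m)).
  { pose proof (even_pow_nonneg (z - b) m). pose proof (even_pow_nonneg b m).
    unfold M, Rmax. destruct (Rle_dec (Rabs (z - b)) (Rabs b)); rewrite Habs; lra. }
  rewrite <- Habs. apply (Rle_trans _ ((2 * M) ^ (2 * m))).
  - apply pow_incr. split; [apply Rabs_pos | exact Hz].
  - rewrite Rpow_mult_distr. apply Rmult_le_compat_l; [apply pow_le; lra | exact HM].
Qed.

Definition nonneg_poly (n d : nat) (c : nat -> R) : Prop :=
  forall x, 0 <= poly_of_coefs n d c x.

Lemma interiorR_mono m (S T : (nat -> R) -> Prop) c :
  (forall c, S c -> T c) -> interiorR m S c -> interiorR m T c.
Proof. intros HST [r [Hr H]]. exists r. split; auto. Qed.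

Lemma interiorR_nonneg_ray n d K w e t :
  nonneg_poly n d w -> interiorR (dimP n d) (nonneg_poly n d) e -> 0 < t ->
  interiorR (dimP n d) (Pd n d K) (fun j => w j + t * e j).
Proof.
  intros Hw [rho [Hrho He]] Ht. exists (t * rho). split; [nra|]. intros c Hc x _.
  replace (poly_of_coefs n d c x) with
    (poly_of_coefs n d w x + t * poly_of_coefs n d (fun j => (c j - w j) / t) x).
  - pose proof (Hw x). assert (0 <= poly_of_coefs n d (fun j => (c j - w j) / t) x); [|nra].
    apply He. intros j Hj. specialize (Hc j Hj).
    replace ((c j - w j) / t - e j) with ((c j - (w j + t * e j)) / t) by (field; lra).
    unfold Rdiv. rewrite Rabs_mult, (Rabs_right (/ t)) by (apply Rle_ge, Rlt_le, Rinv_0_lt_compat, Ht).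
    apply (Rmult_lt_reg_r t); [exact Ht|]. rewrite Rmult_assoc, Rinv_l; lra.
  - rewrite <- poly_of_coefs_scal, <- poly_of_coefs_plus. apply poly_of_coefs_ext.
    intros; field; lra.
Qed.

Fixpoint max_norm1 (k : nat) (x : nat -> R) : R :=
  match k with O => 1 | S k => Rmax (max_norm1 k x) (Rabs (x k)) end.

Lemma max_norm1_ge1 k x : 1 <= max_norm1 k x.
Proof. induction k; simpl; [lra|]. eapply Rle_trans; [apply IHk | apply Rmax_l]. Qed.

Lemma max_norm1_ge k x i : (i < k)%nat -> Rabs (x i) <= max_norm1 k x.
Proof.
  induction k; simpl; intros H; [lia|].
  destruct (Nat.eq_dec i k) as [->|]; [apply Rmax_r|].
  eapply Rle_trans; [apply IHk; lia | apply Rmax_l].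
Qed.

Lemma max_norm1_pow_le k x m :
  max_norm1 k x ^ (2 * m) <= 1 + rsum k (fun i => x i ^ (2 * m)).
Proof.
  induction k; cbn [max_norm1 rsum]; [rewrite pow1; lra|].
  pose proof (even_pow_nonneg (x k) m).
  unfold Rmax. destruct (Rle_dec (max_norm1 k x) (Rabs (x k))).
  - rewrite RPow_abs, Rabs_right by (apply Rle_ge, even_pow_nonneg).
    pose proof (rsum_nonneg k (fun i => x i ^ (2 * m)) (fun i _ => even_pow_nonneg (x i) m)).
    lra.
  - lra.
Qed.

Section Witness.
Variables (n m : nat) (a : nat -> R).
Hypotheses (Hn : (1 <= n)%nat) (Hm : (2 <= m)%nat).
Let d := (2 * m)%nat.

Let y x := x O - a O.
Let dist x := rsum n (fun i => (x i - a i) ^ d).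

Definition witness (u : R) (x : nat -> R) : R :=
  (y x ^ 2 - u) ^ 2 * (1 + y x ^ (2 * (m - 2))) + (dist x - y x ^ d).

Lemma witness_quadratic u x : witness u x =
  (y x ^ 4 + dist x) + u * (-2 * (y x ^ 2 + y x ^ (2 * (m - 1))))
  + u ^ 2 * (1 + y x ^ (2 * (m - 2))).
Proof.
  unfold witness.
  replace d with (4 + 2 * (m - 2))%nat by (unfold d; lia).
  replace (2 * (m - 1))%nat with (2 + 2 * (m - 2))%nat by lia.
  rewrite !pow_add. ring.
Qed.

Lemma witness_nonneg u x : 0 <= witness u x.
Proof.
  unfold witness. pose proof (even_pow_nonneg (y x) (m - 2)).
  assert (y x ^ d <= dist x).
  { apply (rsum_term_le n (fun i => (x i - a i) ^ d) O); [intros; apply even_pow_nonneg | lia]. }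
  pose proof (pow2_ge_0 (y x ^ 2 - u)). nra.
Qed.

Lemma witness_minus1_ge x : 1 + dist x <= witness (-1) x.
Proof.
  rewrite witness_quadratic. replace d with (2 * m)%nat by reflexivity.
  replace (2 * (m - 1))%nat with (2 + 2 * (m - 2))%nat by lia.
  pose proof (even_pow_nonneg (y x) (m - 2)). pose proof (pow2_ge_0 (y x)).
  rewrite pow_add. replace (y x ^ 4) with (y x ^ 2 * y x ^ 2) by ring. nra.
Qed.

Lemma witness_root u : 0 < u -> witness u (fun i => if Nat.eqb i O then a O + sqrt u else a i) = 0.
Proof.
  intros Hu. unfold witness, dist, y.
  rewrite (rsum_ext n _ (fun i => if Nat.eqb i O then sqrt u ^ d else 0)).
  - rewrite rsum_delta by lia. cbn [Nat.eqb].
    replace (a O + sqrt u - a O) with (sqrt u) by ring. rewrite pow2_sqrt by lra. ring.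
  - intros i _. destruct (Nat.eqb_spec i O) as [->|]; [f_equal; ring|].
    rewrite Rminus_diag. apply pow_i. unfold d; lia.
Qed.

Let kappa := 1 + 2 ^ d * (1 + rsum n (fun i => a i ^ d)).

Lemma witness_coercive x : max_norm1 n x ^ d <= kappa * witness (-1) x.
Proof.
  assert (HA : 0 <= rsum n (fun i => a i ^ d)) by (apply rsum_nonneg; intros; apply even_pow_nonneg).
  assert (H2 : 0 < 2 ^ d) by (apply pow_lt; lra).
  assert (Hdist : 0 <= dist x) by (apply rsum_nonneg; intros; apply even_pow_nonneg).
  assert (Hsum : rsum n (fun i => x i ^ d) <= 2 ^ d * (dist x + rsum n (fun i => a i ^ d))).
  { unfold dist. rewrite <- rsum_plus, <- rsum_scal. apply rsum_le. intros.
    apply even_pow_shift_le. }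
  assert (Hmax : max_norm1 n x ^ d <= 1 + rsum n (fun i => x i ^ d))
    by apply max_norm1_pow_le.
  assert (0 <= 2 ^ d * rsum n (fun i => a i ^ d) * dist x)
    by (apply Rmult_le_pos; [apply Rmult_le_pos|]; lra).
  apply (Rle_trans _ (kappa * (1 + dist x))); [unfold kappa; nra|].
  apply Rmult_le_compat_l; [unfold kappa; nra | apply witness_minus1_ge].
Qed.

Lemma witness_represented : exists c0 c1 c2 : nat -> R, forall u,
  represents n d (fun j => c0 j + u * c1 j + u ^ 2 * c2 j) (witness u).
Proof.
  assert (Hy : forall k, (k <= d)%nat -> exists c, represents n d c (fun x => y x ^ k))
    by (intros; apply represents_shift_pow; lia).
  destruct (Hy 4%nat ltac:(unfold d; lia)) as [e4 He4].
  destruct (represents_rsum n d (fun i x => (x i - a i) ^ d) n) as [es Hes].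
  { intros i Hi. apply represents_shift_pow; lia. }
  destruct (Hy 2%nat ltac:(unfold d; lia)) as [e2 He2].
  destruct (Hy (2 * (m - 1))%nat ltac:(unfold d; lia)) as [e2' He2'].
  destruct (Hy O ltac:(lia)) as [e0 He0].
  destruct (Hy (2 * (m - 2))%nat ltac:(unfold d; lia)) as [e4' He4'].
  exists (fun j => e4 j + es j), (fun j => -2 * (e2 j + e2' j)), (fun j => e0 j + e4' j).
  intros u x. rewrite witness_quadratic. revert x.
  apply (represents_plus n d); [apply (represents_plus n d)|]; [| apply (represents_scal n d) ..].
  - apply (represents_plus n d); assumption.
  - apply (represents_scal n d), (represents_plus n d); assumption.
  - apply (represents_plus n d); assumption.
Qed.
Variables (K : (nat -> R) -> Prop) (r : R).
Hypotheses (Hr : 0 < r) (HK : forall x, ballR n a r x -> K x).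

Lemma witness_boundary u c : 0 < u < r ^ 2 -> represents n d c (witness u) ->
  boundaryR (dimP n d) (Pd n d K) c.
Proof.
  intros Hu Hc. split.
  - intros rho Hrho. exists c. split; [|intros x _; rewrite Hc; apply witness_nonneg].
    intros j _. rewrite Rminus_diag, Rabs_R0. exact Hrho.
  - intros [rho [Hrho Hball]]. destruct (constant_mon_index n d) as [j0 [Hj0 Hone]].
    set (z := fun i => if Nat.eqb i O then a O + sqrt u else a i).
    assert (Hz : K z).
    { apply HK. intros i Hi. unfold z. destruct (Nat.eqb_spec i O) as [->|].
      - replace (a O + sqrt u - a O) with (sqrt u) by ring.
        rewrite Rabs_right by apply Rle_ge, sqrt_pos.
        rewrite <- (sqrt_pow2 r) by lra. apply sqrt_lt_1; lra.
      - rewrite Rminus_diag, Rabs_R0. exact Hr. }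
    assert (Hlow : Pd n d K (fun j => c j + (if Nat.eqb j j0 then - (rho / 2) else 0))).
    { apply Hball. intros j _. replace (_ - _) with (if Nat.eqb j j0 then - (rho / 2) else 0)
        by ring.
      destruct (Nat.eqb j j0); [rewrite Rabs_Ropp, Rabs_right | rewrite Rabs_R0]; lra. }
    specialize (Hlow z Hz).
    rewrite poly_of_coefs_plus, poly_of_coefs_delta in Hlow by exact Hj0.
    rewrite Hc, Hone, witness_root in Hlow by lra. lra.
Qed.

Lemma witness_minus1_interior c : represents n d c (witness (-1)) ->
  interiorR (dimP n d) (nonneg_poly n d) c.
Proof.
  intros Hc. set (N := dimP n d).
  assert (Hkappa : 1 <= kappa).
  { unfold kappa. assert (0 < 2 ^ d) by (apply pow_lt; lra).
    assert (0 <= rsum n (fun i => a i ^ d)) by (apply rsum_nonneg; intros; apply even_pow_nonneg).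
    nra. }
  pose proof (pos_INR N) as HN.
  set (rho := / (kappa * (INR N + 1))).
  exists rho. split; [apply Rinv_0_lt_compat; nra|]. intros c' Hc' x.
  set (B := max_norm1 n x).
  replace (poly_of_coefs n d c' x) with (witness (-1) x + poly_of_coefs n d (fun j => c' j - c j) x)
    by (rewrite <- Hc, <- poly_of_coefs_plus; apply poly_of_coefs_ext; intros; ring).
  assert (Hdiff : Rabs (poly_of_coefs n d (fun j => c' j - c j) x) <= INR N * (rho * B ^ d)).
  { unfold poly_of_coefs. eapply Rle_trans; [apply rsum_abs|]. rewrite <- rsum_const.
    apply rsum_le. intros j Hj. rewrite Rabs_mult.
    apply Rmult_le_compat; [apply Rabs_pos | apply Rabs_pos | left; apply Hc'; exact Hj|].
    apply mon_basis_bound; [exact Hj | apply max_norm1_ge1 | intros; apply max_norm1_ge; auto]. }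
  assert (INR N * (rho * B ^ d) <= witness (-1) x).
  { pose proof (witness_coercive x). fold B in H.
    assert (0 <= B ^ d) by (apply pow_le; pose proof (max_norm1_ge1 n x); unfold B; lra).
    replace (INR N * (rho * B ^ d)) with (INR N / (INR N + 1) * (B ^ d / kappa))
      by (unfold rho; field; lra).
    assert (INR N / (INR N + 1) <= 1).
    { apply (Rmult_le_reg_r (INR N + 1)); [lra|]. field_simplify; lra. }
    assert (B ^ d / kappa <= witness (-1) x).
    { apply (Rmult_le_reg_r kappa); [lra|]. field_simplify; lra. }
    assert (0 <= B ^ d / kappa) by (apply Rmult_le_pos; [|left; apply Rinv_0_lt_compat]; lra).
    nra. }
  pose proof (Rle_abs (- poly_of_coefs n d (fun j => c' j - c j) x)) as Habs.
  rewrite Rabs_Ropp in Habs. lra.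
Qed.

Lemma witness_curve : exists gam : R -> nat -> R,
  (forall j, poly_fun (fun u => gam u j)) /\
  (forall u, nonneg_poly n d (gam u)) /\
  (forall u, 0 < u < r ^ 2 -> boundaryR (dimP n d) (Pd n d K) (gam u)) /\
  interiorR (dimP n d) (nonneg_poly n d) (gam (-1)).
Proof.
  destruct witness_represented as [c0 [c1 [c2 Hc]]].
  exists (fun u j => c0 j + u * c1 j + u ^ 2 * c2 j). split; [|split; [|split]].
  - intros j. apply poly_fun_plus; [apply poly_fun_affine|].
    apply poly_fun_mult; [apply poly_fun_pow, poly_fun_id | apply poly_fun_const].
  - intros u x. rewrite Hc. apply witness_nonneg.
  - intros u Hu. apply (witness_boundary u); auto.
  - apply witness_minus1_interior, Hc.
Qed.
End Witness.

(** * The obstructions *)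

Lemma continuity_pt_eps f x : continuity_pt f x -> forall eps, 0 < eps ->
  exists del, 0 < del /\ forall y, Rabs (y - x) < del -> Rabs (f y - f x) < eps.
Proof.
  intros H eps He. destruct (H eps He) as [del [Hd Hf]]. exists del. split; [exact Hd|].
  intros y Hy. destruct (Req_dec y x) as [->|Hne].
  - rewrite Rminus_diag, Rabs_R0. exact He.
  - apply Hf. split; [split; [exact I | auto] | exact Hy].
Qed.

Lemma ray_in_ball N c e r : 0 < r -> exists t0, 0 < t0 /\
  forall t, 0 < t <= t0 -> ballR N c r (fun j => c j + t * e j).
Proof.
  intros Hr. set (E := 1 + rsum N (fun j => Rabs (e j))).
  assert (HE : 1 <= E) by (unfold E; pose proof (rsum_nonneg N _ (fun j _ => Rabs_pos (e j))); lra).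
  exists (r / (2 * E)). split; [apply Rdiv_lt_0_compat; lra|]. intros t Ht j Hj.
  replace (c j + t * e j - c j) with (t * e j) by ring.
  rewrite Rabs_mult, (Rabs_right t) by lra.
  assert (Rabs (e j) <= E).
  { pose proof (rsum_term_le N (fun j => Rabs (e j)) j (fun j _ => Rabs_pos (e j)) Hj).
    unfold E. simpl in H. lra. }
  apply (Rle_lt_trans _ (r / (2 * E) * E)).
  - apply Rmult_le_compat; [lra | apply Rabs_pos | lra | lra].
  - replace (r / (2 * E) * E) with (r / 2) by (field; lra). lra.
Qed.

Lemma log_barrier_vanishes N S (phi : mpoly) c e :
  boundaryR N S c -> is_barrier N S (fun c => - ln (mp_eval phi c)) ->
  (forall t, 0 < t -> interiorR N S (fun j => c j + t * e j)) ->
  (forall t, 0 < t -> 0 < mp_eval phi (fun j => c j + t * e j)) ->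
  mp_eval phi c = 0.
Proof.
  intros Hc Hbar Hray Hpos.
  set (g := fun t => mp_eval phi (fun j => c j + t * e j)).
  assert (Hg0 : g 0 = mp_eval phi c).
  { unfold g. f_equal. apply functional_extensionality. intros; ring. }
  assert (Hgc : continuity_pt g 0).
  { apply poly_fun_continuous, poly_fun_mp_eval. intros; apply poly_fun_affine. }
  rewrite <- Hg0.
  destruct (Rtotal_order (g 0) 0) as [Hneg|[Hzero|Hgt]]; [exfalso | exact Hzero | exfalso].
  - destruct (continuity_pt_eps g 0 Hgc (- g 0)) as [del [Hdel Hnear]]; [lra|].
    specialize (Hnear (del / 2)). rewrite Rminus_0_r, Rabs_right in Hnear by lra.
    specialize (Hnear ltac:(lra)). pose proof (Hpos (del / 2) ltac:(lra)).
    apply Rabs_def2 in Hnear. unfold g in *. lra.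
  (* Near [c] along the ray the barrier forces [g t < g 0 / 2], contradicting continuity. *)
  - destruct (Hbar c Hc (- ln (g 0 / 2))) as [rb [Hrb Hball]].
    destruct (continuity_pt_eps g 0 Hgc (g 0 / 2)) as [del [Hdel Hnear]]; [lra|].
    destruct (ray_in_ball N c e rb Hrb) as [t0 [Ht0 Hin]].
    set (t := Rmin (del / 2) t0).
    assert (Ht : 0 < t) by (apply Rmin_glb_lt; lra).
    assert (t <= del / 2) by apply Rmin_l. assert (t <= t0) by apply Rmin_r.
    specialize (Hball _ (Hin t ltac:(lra)) (Hray t Ht)).
    assert (Hsmall : g t < g 0 / 2).
    { apply ln_lt_inv; [apply (Hpos t Ht) | lra |].
      change (mp_eval phi (fun j => c j + t * e j)) with (g t) in Hball. lra. }
    specialize (Hnear t). rewrite Rminus_0_r, Rabs_right in Hnear by lra.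
    specialize (Hnear ltac:(lra)). apply Rabs_def2 in Hnear. lra.
Qed.

Section Obstruction.
Variables (N : nat) (S : (nat -> R) -> Prop) (gam : R -> nat -> R) (b : R).
Hypotheses (Hb : 0 < b) (gam_poly : forall j, poly_fun (fun u => gam u j))
  (gam_in : forall u, 0 < u < b -> S (gam u))
  (gam_boundary : forall u, 0 < u < b -> boundaryR N S (gam u))
  (gam_interior : interiorR N S (gam (-1)))
  (gam_ray : forall u t, 0 < u < b -> 0 < t -> interiorR N S (fun j => gam u j + t * gam (-1) j)).

Lemma mp_eval_vanishing_on_arc (phi : mpoly) :
  (forall u, 0 < u < b -> mp_eval phi (gam u) = 0) -> mp_eval phi (gam (-1)) = 0.
Proof.
  intros H0. apply (RealPoly.poly_fun_eq0 (fun u => mp_eval phi (gam u)) 0 b); auto.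
  apply poly_fun_mp_eval, gam_poly.
Qed.

Lemma no_poly_vanishing_on_boundary : ~ exists phi : mpoly,
  (forall c, interiorR N S c -> 0 < mp_eval phi c) /\
  (forall c, boundaryR N S c -> mp_eval phi c = 0).
Proof.
  intros [phi [Hint Hbd]].
  assert (mp_eval phi (gam (-1)) = 0) by (apply mp_eval_vanishing_on_arc; auto).
  pose proof (Hint _ gam_interior). lra.
Qed.

Lemma no_poly_log_barrier : ~ exists phi : mpoly,
  (forall c, interiorR N S c -> 0 < mp_eval phi c) /\
  is_barrier N S (fun c => - ln (mp_eval phi c)).
Proof.
  intros [phi [Hint Hbar]].
  assert (mp_eval phi (gam (-1)) = 0).
  { apply mp_eval_vanishing_on_arc. intros u Hu.
    apply (log_barrier_vanishes N S phi (gam u) (gam (-1))); auto. }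
  pose proof (Hint _ gam_interior). lra.
Qed.

Lemma not_LMI_representable : ~ LMI_representable N S.
Proof.
  intros [k [A [Hsym [HS Hpd]]]].
  destruct (RealPoly.singular_poly_fun k (fun u => pencil N A (gam u)) 0 b) with (u := -1)
    as [v [[i [Hi Hvi]] Hv]]; auto.
  - intros i j. apply poly_fun_plus; [apply poly_fun_const|].
    apply poly_fun_rsum. intros l. apply poly_fun_mult; [apply gam_poly | apply poly_fun_const].
  - intros u Hu. apply (lmi_boundary_singular N k A S); auto. apply gam_boundary; auto.
  - enough (quad_form k (pencil N A (gam (-1))) v = 0).
    { pose proof (Hpd _ gam_interior v (ex_intro _ i (conj Hi Hvi))). lra. }
    unfold quad_form. rewrite (rsum_ext k _ (fun _ => 0)); [rewrite rsum_const; ring|].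
    intros i' Hi'. rewrite (rsum_ext k _ (fun j => v i' * (pencil N A (gam (-1)) i' j * v j)))
      by (intros; ring).
    rewrite rsum_scal, Hv by exact Hi'. ring.
Qed.
End Obstruction.

Theorem mainTheorem14 (n d : nat) (K : (nat -> R) -> Prop) :
  (1 <= n)%nat ->
  semialgebraic n K ->
  (exists x, interiorR n K x) ->
  Nat.Even d -> (2 < d)%nat ->
  (~ exists phi : mpoly, mp_in_vars (dimP n d) phi /\
       (forall c, interiorR (dimP n d) (Pd n d K) c -> 0 < mp_eval phi c) /\
       (forall c, boundaryR (dimP n d) (Pd n d K) c -> mp_eval phi c = 0)) /\
  (~ exists phi : mpoly, mp_in_vars (dimP n d) phi /\
       (forall c, interiorR (dimP n d) (Pd n d K) c -> 0 < mp_eval phi c) /\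
       is_barrier (dimP n d) (Pd n d K) (fun c => - ln (mp_eval phi c))) /\
  ~ LMI_representable (dimP n d) (Pd n d K).
Proof.
  intros Hn _ [a [r [Hr HK]]] [m ->] Hd.
  destruct (witness_curve n m a Hn ltac:(lia) K r Hr HK) as [gam [Hpoly [Hnn [Hbd Hint]]]].
  assert (Hr2 : 0 < r ^ 2) by (apply pow_lt, Hr).
  assert (Hin : forall u, Pd n (2 * m) K (gam u)) by (intros u x _; apply Hnn).
  assert (HintPd : interiorR (dimP n (2 * m)) (Pd n (2 * m) K) (gam (-1)))
    by (apply (interiorR_mono _ (nonneg_poly n (2 * m))); [intros c Hc x _; apply Hc | exact Hint]).
  assert (Hray : forall u t, 0 < u < r ^ 2 -> 0 < t ->
    interiorR (dimP n (2 * m)) (Pd n (2 * m) K) (fun j => gam u j + t * gam (-1) j))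
    by (intros; apply interiorR_nonneg_ray; auto).
  split; [|split].
  - intros [phi [_ Hphi]]. eapply no_poly_vanishing_on_boundary; eauto.
  - intros [phi [_ Hphi]]. eapply no_poly_log_barrier; eauto.
  - eapply not_LMI_representable; eauto.
Qed.
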